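(* Let $(M_t)_{t\ge0}$, $(N_t)_{t\ge0}$ be $d$-dimensional processes with independent increments on sublinear expectation spaces $(\Omega_1,\mathcal{H}_1,\hat{\mathbb{E}}_1)$, $(\Omega_2,\mathcal{H}_2,\hat{\mathbb{E}}_2)$ satisfying condition (A) of the context. Let $\Omega=\Omega_1\times\Omega_2$, and for $\omega=(\omega_1,\omega_2)$ and $t\in[0,1]$ put $\tilde M_t(\omega)=M_t(\omega_1)$, $\tilde N_t(\omega)=N_t(\omega_2)$, $X_t=(\tilde M_t,\tilde N_t)$. Fix $n\ge1$, $\delta_n=2^{-n}$, let $\mathcal{H}^n=\{\varphi(X_{\delta_n},X_{2\delta_n}-X_{\delta_n},\dots,X_{2^n\delta_n}-X_{(2^n-1)\delta_n}):\varphi\in C_{b.Lip}(\mathbb{R}^{2^n\times2d})\}$, and define $\hat{\mathbb{E}}^n:\mathcal{H}^n\to\mathbb{R}$ as follows. Step 1: for $k\le 2^n$ and $\phi\in C_{b.Lip}(\mathbb{R}^{2d})$, $\hat{\mathbb{E}}^n[\phi(X_{k\delta_n}-X_{(k-1)\delta_n})]=\hat{\mathbb{E}}_1[\psi(M_{k\delta_n}-M_{(k-1)\delta_n})]$ where $\psi(x)=\hat{\mathbb{E}}_2[\phi(x,N_{k\delta_n}-N_{(k-1)\delta_n})]$, $x\in\mathbb{R}^d$. Step 2: for $\varphi\in C_{b.Lip}(\mathbb{R}^{2^n\times2d})$, $\hat{\mathbb{E}}^n[\varphi(X_{\delta_n},\dots,X_{2^n\delta_n}-X_{(2^n-1)\delta_n})]=\varphi_0$,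 where $\varphi_{2^n}=\varphi$ and, backwards for $k=2^n,\dots,1$, $\varphi_{k-1}(x_1,\dots,x_{k-1})=\hat{\mathbb{E}}^n[\varphi_k(x_1,\dots,x_{k-1},X_{k\delta_n}-X_{(k-1)\delta_n})]$ computed by Step 1. Then: (1) $(\Omega,\mathcal{H}^n,\hat{\mathbb{E}}^n)$ is a sublinear expectation space; (2) for each $2\le k\le 2^n$, $X_{k\delta_n}-X_{(k-1)\delta_n}$ is independent from $(X_{\delta_n},\dots,X_{(k-1)\delta_n}-X_{(k-2)\delta_n})$ under $\hat{\mathbb{E}}^n$; (3) $(\tilde M_{\delta_n},\tilde M_{2\delta_n}-\tilde M_{\delta_n},\dots,\tilde M_{2^n\delta_n}-\tilde M_{(2^n-1)\delta_n})$ under $\hat{\mathbb{E}}^n$ has the same distribution as $(M_{\delta_n},M_{2\delta_n}-M_{\delta_n},\dots,M_{2^n\delta_n}-M_{(2^n-1)\delta_n})$ under $\hat{\mathbb{E}}_1$, and likewise $(\tilde N_{\delta_n},\dots,\tilde N_{2^n\delta_n}-\tilde N_{(2^n-1)\delta_n})\overset{d}{=}(N_{\delta_n},\dots,N_{2^n\delta_n}-N_{(2^n-1)\delta_n})$.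
   Context: $C_{b.Lip}(\mathbb{R}^d)$: bounded Lipschitz functions. A sublinear expectation space $(\Omega,\mathcal{H},\hat{\mathbb{E}})$: $\mathcal{H}$ is a linear space of real functions on $\Omega$ closed under composition with $C_{b.Lip}$ functions, and $\hat{\mathbb{E}}:\mathcal{H}\to\mathbb{R}$ is monotone, constant preserving, subadditive, positively homogeneous. A sublinear $\tilde{\mathbb{E}}$ dominates $\hat{\mathbb{E}}$ if $\hat{\mathbb{E}}[X]-\hat{\mathbb{E}}[Y]\le\tilde{\mathbb{E}}[X-Y]$. Condition (A): there exist sublinear expectations $\tilde{\mathbb{E}}_i$ on $\mathcal{H}_i$ dominating $\hat{\mathbb{E}}_i$ ($i=1,2$) with $\lim_{s\to t}(\tilde{\mathbb{E}}_1[|M_s-M_t|]+\tilde{\mathbb{E}}_2[|N_s-N_t|])=0$ for each $t\ge0$. $Y$ is independent from $X$ under $\hat{\mathbb{E}}$ if $\hat{\mathbb{E}}[\varphi(X,Y)]=\hat{\mathbb{E}}[\hat{\mathbb{E}}[\varphi(x,Y)]_{x=X}]$ for all bounded Lipschitz $\varphi$. A process with $X_0=0$ has independent increments if for all $t_1<\dots<t_n$, $X_{t_n}-X_{t_{n-1}}$ is independent from $(X_{t_1},\dots,X_{t_{n-1}})$. $\overset{d}{=}$ means equal expectations of $\varphi(\cdot)$ for all bounded Lipschitz $\varphi$. *)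

From HB Require Import structures.
From mathcomp Require Import all_boot all_order all_algebra.
From mathcomp Require Import boolp reals.
Set Implicit Arguments. Unset Strict Implicit. Unset Printing Implicit Defensive.
Import Order.TTheory GRing.Theory Num.Theory.
Local Open Scope ring_scope.

(* Sup norm on matrices (used only to define Lipschitz continuity; all norms
   on R^k are equivalent, so the class C_{b.Lip} does not depend on it). *)
Definition mxnorm (R : realType) (p q : nat) (x : 'M[R]_(p, q)) : R :=
  \big[Num.max/0]_(i < p) \big[Num.max/0]_(j < q) `|x i j|.

Definition enorm (R : realType) (d : nat) (x : 'rV[R]_d) : R :=
  Num.sqrt (\sum_(i < d) x 0 i ^+ 2).

Definition bLip (R : realType) (p q : nat) (f : 'M[R]_(p, q) -> R) : Prop :=
  (exists C : R, forall x, `|f x| <= C) /\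
  (exists L : R, forall x y, `|f x - f y| <= L * mxnorm (x - y)).

Definition bLip2 (R : realType) (p q r s : nat)
  (f : 'M[R]_(p, q) -> 'M[R]_(r, s) -> R) : Prop :=
  (exists C : R, forall x y, `|f x y| <= C) /\
  (exists L : R, forall x x' y y',
      `|f x y - f x' y'| <= L * (mxnorm (x - x') + mxnorm (y - y'))).

(* (Omega, H, E) is a sublinear expectation space.  H is a set of real
   functions on Omega; E is only constrained on H. *)
Record sublinear_space (R : realType) (Omega : Type)
    (H : (Omega -> R) -> Prop) (E : (Omega -> R) -> R) : Prop := {
  sl_add : forall X Y, H X -> H Y -> H (fun w => X w + Y w);
  sl_scale : forall (c : R) X, H X -> H (fun w => c * X w);
  sl_comp : forall (m : nat) (X : Omega -> 'rV[R]_m) (phi : 'rV[R]_m -> R),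
      (forall i, H (fun w => X w 0 i)) -> bLip phi -> H (fun w => phi (X w));
  sl_mono : forall X Y, H X -> H Y -> (forall w, X w <= Y w) -> E X <= E Y;
  sl_const : forall c : R, E (fun _ => c) = c;
  sl_subadd : forall X Y, H X -> H Y -> E (fun w => X w + Y w) <= E X + E Y;
  sl_homog : forall (l : R) X, 0 <= l -> H X -> E (fun w => l * X w) = l * E X
}.

Definition indep (R : realType) (Omega : Type) (E : (Omega -> R) -> R)
    (p q r s : nat) (X : Omega -> 'M[R]_(p, q)) (Y : Omega -> 'M[R]_(r, s)) : Prop :=
  forall phi : 'M[R]_(p, q) -> 'M[R]_(r, s) -> R, bLip2 phi ->
    E (fun w => phi (X w) (Y w)) = E (fun w => E (fun w' => phi (X w) (Y w'))).

Definition same_distr (R : realType) (Omega1 Omega2 : Type)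
    (E1 : (Omega1 -> R) -> R) (E2 : (Omega2 -> R) -> R) (p q : nat)
    (X : Omega1 -> 'M[R]_(p, q)) (Y : Omega2 -> 'M[R]_(p, q)) : Prop :=
  forall phi : 'M[R]_(p, q) -> R, bLip phi ->
    E1 (fun w => phi (X w)) = E2 (fun w => phi (Y w)).

Definition is_process (R : realType) (Omega : Type) (H : (Omega -> R) -> Prop)
    (d : nat) (M : R -> Omega -> 'rV[R]_d) : Prop :=
  forall t, 0 <= t -> forall i, H (fun w => M t w 0 i).

Definition indep_incr (R : realType) (Omega : Type) (E : (Omega -> R) -> R)
    (d : nat) (M : R -> Omega -> 'rV[R]_d) : Prop :=
  M 0 = (fun _ => 0) /\
  forall (k : nat) (t : nat -> R), 0 <= t 0%N ->
    (forall i, (i <= k)%N -> t i < t i.+1) ->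
    indep E (fun w => \matrix_(i < k.+1) M (t i) w)
            (fun w => M (t k.+1) w - M (t k) w).

Definition dominates (R : realType) (Omega : Type) (H : (Omega -> R) -> Prop)
    (E Et : (Omega -> R) -> R) : Prop :=
  forall X Y, H X -> H Y -> E X - E Y <= Et (fun w => X w - Y w).

Definition condA (R : realType) (Omega1 Omega2 : Type)
    (H1 : (Omega1 -> R) -> Prop) (E1 : (Omega1 -> R) -> R)
    (H2 : (Omega2 -> R) -> Prop) (E2 : (Omega2 -> R) -> R)
    (d : nat) (M : R -> Omega1 -> 'rV[R]_d) (N : R -> Omega2 -> 'rV[R]_d) : Prop :=
  exists (Et1 : (Omega1 -> R) -> R) (Et2 : (Omega2 -> R) -> R),
    sublinear_space H1 Et1 /\ sublinear_space H2 Et2 /\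
    dominates H1 E1 Et1 /\ dominates H2 E2 Et2 /\
    (forall s t, 0 <= s -> 0 <= t ->
       H1 (fun w => enorm (M s w - M t w)) /\ H2 (fun w => enorm (N s w - N t w))) /\
    (forall t, 0 <= t -> forall e : R, 0 < e -> exists r : R, 0 < r /\
       forall s, 0 <= s -> `|s - t| < r ->
         `|Et1 (fun w => enorm (M s w - M t w)) + Et2 (fun w => enorm (N s w - N t w))| < e).

Definition Nn (n : nat) : nat := (2 ^ n)%N.
Definition dlt (R : realType) (n : nat) : R := (2%:R ^+ n)^-1.
Definition tk (R : realType) (n k : nat) : R := k%:R * dlt R n.

Definition incr (R : realType) (Omega : Type) (d n : nat)
    (M : R -> Omega -> 'rV[R]_d) (k : nat) (w : Omega) : 'rV[R]_d :=
  M (tk R n k.+1) w - M (tk R n k) w.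

(* (M_{delta}, M_{2 delta} - M_{delta}, ..., M_{2^n delta} - M_{(2^n-1) delta})
   as a 2^n x d matrix (row k = (k+1)-th increment; row 0 = M_delta - M_0). *)
Definition Mincs (R : realType) (Omega : Type) (d n : nat)
    (M : R -> Omega -> 'rV[R]_d) (w : Omega) : 'M[R]_(Nn n, d) :=
  \matrix_(k < Nn n) incr n M k w.

Definition Xincr (R : realType) (Omega1 Omega2 : Type) (d n : nat)
    (M : R -> Omega1 -> 'rV[R]_d) (N : R -> Omega2 -> 'rV[R]_d)
    (k : nat) (w : Omega1 * Omega2) : 'rV[R]_(d + d) :=
  row_mx (incr n M k w.1) (incr n N k w.2).

Definition Xincs (R : realType) (Omega1 Omega2 : Type) (d n : nat)
    (M : R -> Omega1 -> 'rV[R]_d) (N : R -> Omega2 -> 'rV[R]_d)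
    (w : Omega1 * Omega2) : 'M[R]_(Nn n, d + d) :=
  \matrix_(k < Nn n) Xincr n M N k w.

Definition Hn (R : realType) (Omega1 Omega2 : Type) (d n : nat)
    (M : R -> Omega1 -> 'rV[R]_d) (N : R -> Omega2 -> 'rV[R]_d)
    (Y : Omega1 * Omega2 -> R) : Prop :=
  exists phi : 'M[R]_(Nn n, d + d) -> R,
    bLip phi /\ Y = (fun w => phi (Xincs n M N w)).

Definition step1 (R : realType) (Omega1 Omega2 : Type)
    (E1 : (Omega1 -> R) -> R) (E2 : (Omega2 -> R) -> R) (d n : nat)
    (M : R -> Omega1 -> 'rV[R]_d) (N : R -> Omega2 -> 'rV[R]_d)
    (k : nat) (phi : 'rV[R]_(d + d) -> R) : R :=
  let psi := fun x : 'rV[R]_d => E2 (fun w2 => phi (row_mx x (incr n N k w2))) in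
  E1 (fun w1 => psi (incr n M k w1)).

Definition set_row (R : realType) (p q : nat) (x : 'M[R]_(p, q)) (i : nat)
    (z : 'rV[R]_q) : 'M[R]_(p, q) :=
  \matrix_(a < p, b < q) (if (a : nat) == i then z 0 b else x a b).

(* Step 2, backward recursion: backward m phi = phi_{2^n - m}, seen as a function
   of the whole 2^n x 2d matrix which only depends on its first 2^n - m rows. *)
Fixpoint backward (R : realType) (Omega1 Omega2 : Type)
    (E1 : (Omega1 -> R) -> R) (E2 : (Omega2 -> R) -> R) (d n : nat)
    (M : R -> Omega1 -> 'rV[R]_d) (N : R -> Omega2 -> 'rV[R]_d)
    (m : nat) (phi : 'M[R]_(Nn n, d + d) -> R) : 'M[R]_(Nn n, d + d) -> R :=
  match m with
  | 0%N => phi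
  | m'.+1 => fun x =>
      step1 E1 E2 n M N (Nn n - m'.+1)
        (fun z => @backward R Omega1 Omega2 E1 E2 d n M N m' phi (set_row x (Nn n - m'.+1) z))
  end.

Definition En_val (R : realType) (Omega1 Omega2 : Type)
    (E1 : (Omega1 -> R) -> R) (E2 : (Omega2 -> R) -> R) (d n : nat)
    (M : R -> Omega1 -> 'rV[R]_d) (N : R -> Omega2 -> 'rV[R]_d)
    (phi : 'M[R]_(Nn n, d + d) -> R) : R :=
  @backward R Omega1 Omega2 E1 E2 d n M N (Nn n) phi 0.

(* E^n : E^n[phi(increments of X)] = phi_0 (for a chosen representation phi;
   value 0 outside H^n, where E^n is not constrained). *)
Definition En (R : realType) (Omega1 Omega2 : Type)
    (E1 : (Omega1 -> R) -> R) (E2 : (Omega2 -> R) -> R) (d n : nat)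
    (M : R -> Omega1 -> 'rV[R]_d) (N : R -> Omega2 -> 'rV[R]_d)
    (Y : Omega1 * Omega2 -> R) : R :=
  match pselect (Hn n M N Y) with
  | left h => @En_val R Omega1 Omega2 E1 E2 d n M N (proj1_sig (cid h))
  | right _ => 0
  end.

(* E^n is the backward recursion of the Step-1 operators
   phi |-> E1[x |-> E2[phi(x, N-increment)](M-increment)], and each of them is a
   sublinear operator on bounded Lipschitz functions; monotonicity, constancy,
   subadditivity and positive homogeneity pass through the recursion, which gives
   (1) once E^n is shown to be well defined.  For that, if phi = psi on the range of
   the increment vector of X, then |phi - psi| is dominated by a multiple of the
   (truncated) distances of the M-half and of the N-half of the argument to the
   ranges of the increment vectors of M and of N.  By the independence of the
   increments of M, the recursion applied to a function of the M-half alone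
   collapses to E1 of that function of the increment vector of M, which vanishes
   for the distance function; likewise for N.  The same collapse gives (3), and
   (2) holds because the recursion applied to a function of the first k increments
   ends with the Step-1 operator acting on the k-th increment. *)

From Pilot Require Import Defs.
From mathcomp Require Import all_boot all_order all_algebra.
From mathcomp Require Import boolp classical_sets reals.
From mathcomp Require Import ring lra zify.
Set Implicit Arguments. Unset Strict Implicit. Unset Printing Implicit Defensive.
Import Order.TTheory GRing.Theory Num.Theory.
Local Open Scope ring_scope.

Section MxNorm.
Variable R : realType.
Implicit Types p q r s : nat.

Lemma mxnorm_ge0 p q (x : 'M[R]_(p, q)) : 0 <= mxnorm x.
Proof. by rewrite /mxnorm bigmax_idl le_max lexx. Qed.

Lemma mxnorm_entry p q (x : 'M[R]_(p, q)) i j : `|x i j| <= mxnorm x.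
Proof.
apply: le_trans (le_bigmax _ (fun i => \big[Num.max/0]_(j < q) `|x i j|) i).
exact: (le_bigmax _ (fun j => `|x i j|)).
Qed.

Lemma mxnorm_le p q (x : 'M[R]_(p, q)) c :
  0 <= c -> (forall i j, `|x i j| <= c) -> mxnorm x <= c.
Proof. by move=> c0 le_xc; apply: bigmax_le => // i _; apply: bigmax_le. Qed.

Lemma mxnorm0 p q : mxnorm (0 : 'M[R]_(p, q)) = 0.
Proof.
by apply/eqP; rewrite eq_le mxnorm_ge0 andbT mxnorm_le // => i j; rewrite mxE normr0.
Qed.

Lemma mxnormB_sym p q (x y : 'M[R]_(p, q)) : mxnorm (x - y) = mxnorm (y - x).
Proof. by apply: eq_bigr => i _; apply: eq_bigr => j _; rewrite !mxE distrC. Qed.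

Lemma mxnorm_entry_sub p q (x y : 'M[R]_(p, q)) i j : `|x i j - y i j| <= mxnorm (x - y).
Proof. by have := mxnorm_entry (x - y) i j; rewrite !mxE. Qed.

Lemma mxnorm_triangle p q (x y z : 'M[R]_(p, q)) :
  mxnorm (x - z) <= mxnorm (x - y) + mxnorm (y - z).
Proof.
apply: mxnorm_le => [|i j]; first by rewrite addr_ge0 ?mxnorm_ge0.
rewrite !mxE -[x i j - z i j](subrKA (y i j)).
by apply: le_trans (ler_normD _ _) (lerD (mxnorm_entry_sub _ _ _ _) (mxnorm_entry_sub _ _ _ _)).
Qed.

Lemma mxnorm_row_mx p q1 q2 (a a' : 'M[R]_(p, q1)) (b b' : 'M[R]_(p, q2)) :
  mxnorm (row_mx a b - row_mx a' b') <= mxnorm (a - a') + mxnorm (b - b').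
Proof.
apply: mxnorm_le => [|i j]; first by rewrite addr_ge0 ?mxnorm_ge0.
rewrite !mxE; case: (split j) => k.
  by apply: le_trans (mxnorm_entry_sub _ _ _ _) _; rewrite lerDl mxnorm_ge0.
by apply: le_trans (mxnorm_entry_sub _ _ _ _) _; rewrite lerDr mxnorm_ge0.
Qed.

Lemma set_rowE p q (x : 'M[R]_(p, q)) k z i j :
  set_row x k z i j = if (i : nat) == k then z 0 j else x i j.
Proof. by rewrite mxE. Qed.

Lemma mxnorm_set_row p q (x x' : 'M[R]_(p, q)) k (z z' : 'rV[R]_q) :
  mxnorm (set_row x k z - set_row x' k z') <= mxnorm (x - x') + mxnorm (z - z').
Proof.
apply: mxnorm_le => [|i j]; first by rewrite addr_ge0 ?mxnorm_ge0.
rewrite !mxE; case: eqP => _.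
  by apply: le_trans (mxnorm_entry_sub _ _ _ _) _; rewrite lerDr mxnorm_ge0.
by apply: le_trans (mxnorm_entry_sub _ _ _ _) _; rewrite lerDl mxnorm_ge0.
Qed.

Definition mx_lipschitz p q r s (K : R) (g : 'M[R]_(p, q) -> 'M[R]_(r, s)) :=
  forall x y, mxnorm (g x - g y) <= K * mxnorm (x - y).

Lemma mx_lipschitz1 p q r s (g : 'M[R]_(p, q) -> 'M[R]_(r, s)) :
  (forall x y i j, `|g x i j - g y i j| <= mxnorm (x - y)) -> mx_lipschitz 1 g.
Proof.
move=> le_g x y; rewrite mul1r; apply: mxnorm_le => [|i j]; first exact: mxnorm_ge0.
by rewrite !mxE; exact: le_g.
Qed.

Lemma lsubmx_lipschitz p q1 q2 : mx_lipschitz 1 (@lsubmx R p q1 q2).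
Proof. by apply: mx_lipschitz1 => x y i j; rewrite !mxE mxnorm_entry_sub. Qed.

Lemma rsubmx_lipschitz p q1 q2 : mx_lipschitz 1 (@rsubmx R p q1 q2).
Proof. by apply: mx_lipschitz1 => x y i j; rewrite !mxE mxnorm_entry_sub. Qed.

Lemma row_lipschitz p q i : mx_lipschitz 1 (@row R p q i).
Proof. by apply: mx_lipschitz1 => x y i' j; rewrite !mxE mxnorm_entry_sub. Qed.

Lemma lsubmx_set_row p q1 q2 (x : 'M[R]_(p, q1 + q2)) k u v :
  lsubmx (set_row x k (row_mx u v)) = set_row (lsubmx x) k u.
Proof.
apply/matrixP => i j; rewrite !mxE; case: eqP => // _.
by rewrite (unsplitK (inl j) : split (lshift q2 j) = inl j).
Qed.

Lemma rsubmx_set_row p q1 q2 (x : 'M[R]_(p, q1 + q2)) k u v :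
  rsubmx (set_row x k (row_mx u v)) = set_row (rsubmx x) k v.
Proof.
apply/matrixP => i j; rewrite !mxE; case: eqP => // _.
by rewrite (unsplitK (inr j) : split (rshift q1 j) = inr j).
Qed.

Lemma row_set_row p q (i : 'I_p) (x : 'M[R]_(p, q)) z : row i (set_row x i z) = z.
Proof. by apply/rowP => j; rewrite !mxE eqxx. Qed.

Definition first_rows p q k (le_kp : (k <= p)%N) (x : 'M[R]_(p, q)) : 'M[R]_(k, q) :=
  \matrix_(i, j) x (widen_ord le_kp i) j.

Lemma first_rows_set_row p q k (le_kp : (k <= p)%N) (x : 'M[R]_(p, q)) i z :
  (k <= i)%N -> first_rows le_kp (set_row x i z) = first_rows le_kp x.
Proof.
move=> le_ki; apply/matrixP => a j; rewrite !mxE /=.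
by case: eqP => // eq_a; move: (ltn_ord a); rewrite eq_a ltnNge le_ki.
Qed.

Lemma first_rows_lipschitz p q k (le_kp : (k <= p)%N) :
  mx_lipschitz 1 (@first_rows p q k le_kp).
Proof. by apply: mx_lipschitz1 => x y i j; rewrite !mxE mxnorm_entry_sub. Qed.

End MxNorm.

Section BoundedLipschitz.
Variable R : realType.
Implicit Types p q r s : nat.

Lemma bLipP p q (f : 'M[R]_(p, q) -> R) : bLip f ->
  exists C L, [/\ 0 <= C, 0 <= L, forall x, `|f x| <= C &
                  forall x y, `|f x - f y| <= L * mxnorm (x - y)].
Proof.
move=> [[C le_fC] [L lip_f]]; exists `|C|, `|L|; split=> // [x|x y].
  exact: le_trans (le_fC x) (ler_norm _).
by apply: le_trans (lip_f x y) _; rewrite ler_wpM2r ?mxnorm_ge0 ?ler_norm.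
Qed.

Lemma bLip2P p q r s (f : 'M[R]_(p, q) -> 'M[R]_(r, s) -> R) : bLip2 f ->
  exists C L, [/\ 0 <= C, 0 <= L, forall x y, `|f x y| <= C &
    forall x x' y y', `|f x y - f x' y'| <= L * (mxnorm (x - x') + mxnorm (y - y'))].
Proof.
move=> [[C le_fC] [L lip_f]]; exists `|C|, `|L|; split=> // [x y|x x' y y'].
  exact: le_trans (le_fC x y) (ler_norm _).
apply: le_trans (lip_f x x' y y') _.
by rewrite ler_wpM2r ?ler_norm ?addr_ge0 ?mxnorm_ge0.
Qed.

Lemma bLip_const p q (c : R) : bLip (fun _ : 'M[R]_(p, q) => c).
Proof. by split; [exists `|c| | exists 0 => x y; rewrite subrr normr0 mul0r]. Qed.

Lemma bLip_comp p q r s (f : 'M[R]_(r, s) -> R) (g : 'M[R]_(p, q) -> 'M[R]_(r, s)) K :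
  0 <= K -> mx_lipschitz K g -> bLip f -> bLip (fun x => f (g x)).
Proof.
move=> K0 lip_g /bLipP[C [L [C0 L0 le_fC lip_f]]]; split; first by exists C.
exists (L * K) => x y; rewrite -mulrA.
by apply: le_trans (lip_f _ _) _; rewrite ler_wpM2l.
Qed.

Lemma bLip_add p q (f g : 'M[R]_(p, q) -> R) :
  bLip f -> bLip g -> bLip (fun x => f x + g x).
Proof.
move=> /bLipP[C [L [_ _ le_fC lip_f]]] /bLipP[C' [L' [_ _ le_gC lip_g]]].
split; first by exists (C + C') => x; apply: le_trans (ler_normD _ _) (lerD _ _).
exists (L + L') => x y; rewrite mulrDl.
have -> : f x + g x - (f y + g y) = (f x - f y) + (g x - g y) by ring.
exact: le_trans (ler_normD _ _) (lerD _ _).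
Qed.

Lemma bLip_scale p q c (f : 'M[R]_(p, q) -> R) : bLip f -> bLip (fun x => c * f x).
Proof.
move=> /bLipP[C [L [_ _ le_fC lip_f]]].
split; first by exists (`|c| * C) => x; rewrite normrM ler_wpM2l.
by exists (`|c| * L) => x y; rewrite -mulrBr normrM -mulrA ler_wpM2l.
Qed.

Lemma bLip_sub p q (f g : 'M[R]_(p, q) -> R) :
  bLip f -> bLip g -> bLip (fun x => f x - g x).
Proof.
move=> bf /(bLip_scale (-1)) bg.
by under eq_fun do rewrite -mulN1r; exact: bLip_add.
Qed.

Lemma bLip_norm p q (f : 'M[R]_(p, q) -> R) : bLip f -> bLip (fun x => `|f x|).
Proof.
move=> /bLipP[C [L [_ _ le_fC lip_f]]].
split; first by exists C => x; rewrite normr_id.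
by exists L => x y; apply: le_trans (ler_dist_dist _ _) _.
Qed.

Lemma bLip_min p q (f g : 'M[R]_(p, q) -> R) :
  bLip f -> bLip g -> bLip (fun x => Num.min (f x) (g x)).
Proof.
move=> bf bg; have -> : (fun x => Num.min (f x) (g x)) =
    (fun x => 2^-1 * ((f x + g x) - `|f x - g x|)).
  apply: funext => x; case: (leP (f x) (g x)) => [le_fg|lt_gf].
    by rewrite ler0_norm ?subr_le0 //; field.
  by rewrite gtr0_norm ?subr_gt0 //; field.
by apply/bLip_scale/bLip_sub; [exact: bLip_add | exact/bLip_norm/bLip_sub].
Qed.

Lemma bLip_comp_row p q m (f : 'I_m -> 'M[R]_(p, q) -> R) (phi : 'rV[R]_m -> R) :
  (forall i, bLip (f i)) -> bLip phi -> bLip (fun x => phi (\row_i f i x)).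
Proof.
move=> bf; have /choice[L lip_f] : forall i, exists L : R,
    0 <= L /\ forall x y, `|f i x - f i y| <= L * mxnorm (x - y).
  by move=> i; have [_ [L [_ L0 _ lip]]] := bLipP (bf i); exists L.
have sumL0 : 0 <= \sum_i L i by apply: sumr_ge0 => i _; case: (lip_f i).
apply: (bLip_comp sumL0) => x y.
apply: mxnorm_le => [|a i]; first by rewrite mulr_ge0 ?mxnorm_ge0.
rewrite !mxE; apply: le_trans (proj2 (lip_f i) x y) _.
rewrite ler_wpM2r ?mxnorm_ge0 // (bigD1 i) //= lerDl.
by apply: sumr_ge0 => j _; case: (lip_f j).
Qed.

Lemma bLip2_partial p q r s (f : 'M[R]_(p, q) -> 'M[R]_(r, s) -> R) x :
  bLip2 f -> bLip (f x).
Proof.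
move=> /bLip2P[C [L [_ _ le_fC lip_f]]]; split; first by exists C.
by exists L => y y'; have := lip_f x x y y'; rewrite subrr mxnorm0 add0r.
Qed.

Lemma bLip2_comp p q r s p' q' r' s' (f : 'M[R]_(p, q) -> 'M[R]_(r, s) -> R)
    (g : 'M[R]_(p', q') -> 'M[R]_(p, q)) (h : 'M[R]_(r', s') -> 'M[R]_(r, s)) K :
  0 <= K -> mx_lipschitz K g -> mx_lipschitz K h -> bLip2 f ->
  bLip2 (fun x y => f (g x) (h y)).
Proof.
move=> K0 lip_g lip_h /bLip2P[C [L [_ L0 le_fC lip_f]]].
split; first by exists C.
exists (L * K) => x x' y y'; rewrite -mulrA mulrDr.
by apply: le_trans (lip_f _ _ _ _) _; rewrite ler_wpM2l // lerD.
Qed.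

Lemma bLip2_diag p q (f : 'M[R]_(p, q) -> 'M[R]_(p, q) -> R) :
  bLip2 f -> bLip (fun x => f x x).
Proof.
move=> /bLip2P[C [L [_ L0 le_fC lip_f]]]; split; first by exists C.
exists (L *+ 2) => x y.
by apply: le_trans (lip_f x y x y) _; rewrite mulr2n mulrDl mulrDr.
Qed.

Lemma bLip2_row_mx p q1 q2 (f : 'M[R]_(p, q1 + q2) -> R) :
  bLip f -> bLip2 (fun (x : 'M[R]_(p, q1)) (z : 'M[R]_(p, q2)) => f (row_mx x z)).
Proof.
move=> /bLipP[C [L [_ L0 le_fC lip_f]]]; split; first by exists C.
by exists L => x x' z z'; apply: le_trans (lip_f _ _) _; rewrite ler_wpM2l ?mxnorm_row_mx.
Qed.

Lemma bLip2_set_row p q (f : 'M[R]_(p, q) -> R) k :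
  bLip f -> bLip2 (fun x (z : 'rV[R]_q) => f (set_row x k z)).
Proof.
move=> /bLipP[C [L [_ L0 le_fC lip_f]]]; split; first by exists C.
by exists L => x x' z z'; apply: le_trans (lip_f _ _) _; rewrite ler_wpM2l ?mxnorm_set_row.
Qed.

End BoundedLipschitz.

Section SublinearOperator.
Variables (R : realType) (q : nat).

Definition sublinear_op (T : ('rV[R]_q -> R) -> R) : Prop :=
  [/\ forall f g, bLip f -> bLip g -> (forall z, f z <= g z) -> T f <= T g,
      forall c, T (fun _ => c) = c,
      forall f g, bLip f -> bLip g -> T (fun z => f z + g z) <= T f + T g &
      forall c f, 0 <= c -> bLip f -> T (fun z => c * f z) = c * T f].

Variable T : ('rV[R]_q -> R) -> R.
Hypothesis T_sublinear : sublinear_op T.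

Lemma sublinear_op_dist f g c : bLip f -> bLip g ->
  (forall z, `|f z - g z| <= c) -> `|T f - T g| <= c.
Proof.
case: T_sublinear => T_mono T_const T_subadd _ bf bg le_fg.
have le_shift f' g' : bLip f' -> bLip g' -> (forall z, f' z <= g' z + c) ->
    T f' <= T g' + c.
  move=> bf' bg' le_fg'; have bgc := bLip_add bg' (bLip_const _ _ c).
  apply: le_trans (T_mono _ _ bf' bgc le_fg') _.
  by rewrite -{2}(T_const c); apply: T_subadd => //; exact: bLip_const.
rewrite ler_distl lerBlDr; apply/andP; split; apply: le_shift => // z;
  by have := le_fg z; rewrite ler_distl lerBlDr => /andP[].
Qed.

Lemma bLip2_sublinear_op p r (f : 'M[R]_(p, r) -> 'rV[R]_q -> R) :
  bLip2 f -> bLip (fun x => T (f x)).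
Proof.
move=> bf; have [C [L [_ _ le_fC lip_f]]] := bLip2P bf.
have [_ T_const _ _] := T_sublinear.
split.
  exists C => x; rewrite -[T (f x)]subr0 -(T_const 0).
  by apply: sublinear_op_dist => //; [exact: bLip2_partial | exact: bLip_const|
    move=> z; rewrite subr0].
exists L => x y; apply: sublinear_op_dist; try exact: bLip2_partial.
by move=> z; have := lip_f x y z z; rewrite subrr mxnorm0 addr0.
Qed.

End SublinearOperator.

Definition law (R : realType) (Omega : Type) (E : (Omega -> R) -> R) q
    (Z : Omega -> 'rV[R]_q) (f : 'rV[R]_q -> R) : R :=
  E (fun w => f (Z w)).

Definition prod_op (R : realType) q1 q2 (T1 : ('rV[R]_q1 -> R) -> R)
    (T2 : ('rV[R]_q2 -> R) -> R) (f : 'rV[R]_(q1 + q2) -> R) : R :=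
  T1 (fun x => T2 (fun z => f (row_mx x z))).

Lemma sublinear_op_law (R : realType) (Omega : Type) (H : (Omega -> R) -> Prop) E q
    (Z : Omega -> 'rV[R]_q) :
  sublinear_space H E -> (forall i, H (fun w => Z w 0 i)) -> sublinear_op (law E Z).
Proof.
move=> slE HZ; have HfZ f : bLip f -> H (fun w => f (Z w)) by exact: (sl_comp slE HZ).
split=> [f g bf bg le_fg|c|f g bf bg|c f c0 bf]; rewrite /law /=.
- by apply: (sl_mono slE) => [||w]; [exact: HfZ | exact: HfZ | exact: le_fg].
- exact: (sl_const slE).
- by apply: (sl_subadd slE); exact: HfZ.
- by apply: (sl_homog slE) => //; exact: HfZ.
Qed.

Lemma sublinear_prod_op (R : realType) q1 q2 (T1 : ('rV[R]_q1 -> R) -> R)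
    (T2 : ('rV[R]_q2 -> R) -> R) :
  sublinear_op T1 -> sublinear_op T2 -> sublinear_op (prod_op T1 T2).
Proof.
move=> slT1 slT2; have [T1_mono T1_const T1_subadd T1_homog] := slT1.
have [T2_mono T2_const T2_subadd T2_homog] := slT2.
have bT2 (f : 'rV[R]_(q1 + q2) -> R) : bLip f -> bLip (fun x => T2 (fun z => f (row_mx x z))).
  by move=> bf; apply: bLip2_sublinear_op => //; exact: bLip2_row_mx.
have brow (f : 'rV[R]_(q1 + q2) -> R) x : bLip f -> bLip (fun z : 'rV[R]_q2 => f (row_mx x z)).
  by move=> bf; exact: (bLip2_partial x (bLip2_row_mx bf)).
split=> [f g bf bg le_fg|c|f g bf bg|c f c0 bf]; rewrite /prod_op /=.
- apply: T1_mono => [||x]; [exact: bT2 | exact: bT2 |].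
  by apply: T2_mono => [||z]; [exact: brow | exact: brow | exact: le_fg].
- by under eq_fun do rewrite T2_const; exact: T1_const.
- apply: le_trans _ (T1_subadd _ _ (bT2 f bf) (bT2 g bg)).
  apply: T1_mono => [||x]; [exact: bT2 (bLip_add bf bg) | exact: bLip_add (bT2 f bf) (bT2 g bg)|].
  by apply: T2_subadd; exact: brow.
- rewrite -T1_homog //; last exact: bT2.
  by congr T1; apply: funext => x; rewrite T2_homog //; exact: brow.
Qed.

Section BackwardRecursion.
Variables (R : realType) (q P : nat) (T : nat -> ('rV[R]_q -> R) -> R).

Fixpoint backward_rec (m : nat) (f : 'M[R]_(P, q) -> R) : 'M[R]_(P, q) -> R :=
  match m with
  | 0%N => f
  | m'.+1 => fun x => T (P - m'.+1) (fun z => backward_rec m' f (set_row x (P - m'.+1) z))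
  end.

Definition depends_on_first_rows (r : nat) (f : 'M[R]_(P, q) -> R) : Prop :=
  forall x x' : 'M[R]_(P, q),
    (forall (i : 'I_P) j, (i < r)%N -> x i j = x' i j) -> f x = f x'.

Lemma backward_rec_local m f : depends_on_first_rows (P - m) (backward_rec m f).
Proof.
elim: m => [|m IH] x x' eq_xx' /=.
  by congr f; apply/matrixP => i j; apply: eq_xx'; rewrite subn0.
congr T; apply: funext => z; apply: IH => i j lt_i.
by rewrite !set_rowE; case: eqP => // /eqP ne_i; apply: eq_xx'; lia.
Qed.

Lemma backward_rec_congr m j f g :
  backward_rec m f = backward_rec m g -> backward_rec (j + m) f = backward_rec (j + m) g.
Proof. by move=> eq_fg; elim: j => [|j IH] //=; rewrite IH. Qed.

Hypothesis T_sublinear : forall k, sublinear_op (T k).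

Lemma bLip_backward_rec m f : bLip f -> bLip (backward_rec m f).
Proof.
move=> bf; elim: m => [|m IH] //=.
by apply: bLip2_sublinear_op; [exact: T_sublinear | exact: bLip2_set_row].
Qed.

Lemma bLip_backward_rec_row m f x k : bLip f ->
  bLip (fun z => backward_rec m f (set_row x k z)).
Proof. by move=> bf; exact: (bLip2_partial x (bLip2_set_row k (bLip_backward_rec m bf))). Qed.

Lemma backward_rec_mono m f g : bLip f -> bLip g -> (forall x, f x <= g x) ->
  forall x, backward_rec m f x <= backward_rec m g x.
Proof.
move=> bf bg le_fg; elim: m => [|m IH] //= x.
have [T_mono _ _ _] := T_sublinear (P - m.+1).
by apply: T_mono => [||z]; [exact: bLip_backward_rec_row | exact: bLip_backward_rec_row |].
Qed.

Lemma backward_rec_const m c x : backward_rec m (fun _ => c) x = c.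
Proof.
elim: m x => [|m IH] //= x; have [_ T_const _ _] := T_sublinear (P - m.+1).
by under eq_fun do rewrite IH; exact: T_const.
Qed.

Lemma backward_rec_subadd m f g : bLip f -> bLip g ->
  forall x, backward_rec m (fun y => f y + g y) x <= backward_rec m f x + backward_rec m g x.
Proof.
move=> bf bg; elim: m => [|m IH] //= x.
have [T_mono _ T_subadd _] := T_sublinear (P - m.+1).
apply: le_trans (T_subadd _ _ (bLip_backward_rec_row _ _ _ bf) (bLip_backward_rec_row _ _ _ bg)).
apply: T_mono => //; first exact/bLip_backward_rec_row/bLip_add.
by apply: bLip_add; exact: bLip_backward_rec_row.
Qed.

Lemma backward_rec_homog m c f : 0 <= c -> bLip f ->
  forall x, backward_rec m (fun y => c * f y) x = c * backward_rec m f x.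
Proof.
move=> c0 bf; elim: m => [|m IH] //= x.
have [_ _ _ T_homog] := T_sublinear (P - m.+1).
by rewrite -T_homog //; [under eq_fun do rewrite IH | exact: bLip_backward_rec_row].
Qed.

Lemma backward_rec_le_add_scale m f g h K : bLip f -> bLip g -> bLip h -> 0 <= K ->
  (forall x, f x <= g x + K * h x) ->
  forall x, backward_rec m f x <= backward_rec m g x + K * backward_rec m h x.
Proof.
move=> bf bg bh K0 le_f x; have bKh := bLip_scale K bh.
apply: le_trans (backward_rec_mono m bf (bLip_add bg bKh) le_f x) _.
by rewrite -backward_rec_homog //; exact: backward_rec_subadd.
Qed.

Lemma backward_rec_id r m f : depends_on_first_rows r f -> (m <= P - r)%N ->
  backward_rec m f = f.
Proof.
move=> dep_f; elim: m => [|m IH] le_m //=; apply: funext => x.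
have [_ T_const _ _] := T_sublinear (P - m.+1).
rewrite IH; last by lia.
rewrite (_ : (fun z => _) = fun _ => f x) ?T_const //; apply: funext => z.
by apply: dep_f => i j lt_i; rewrite set_rowE; case: eqP => // eq_i; lia.
Qed.

Lemma backward_rec_last k f : (1 <= k <= P)%N -> depends_on_first_rows k f ->
  backward_rec P f = backward_rec P (fun x => T k.-1 (fun z => f (set_row x k.-1 z))).
Proof.
move=> le_k dep_f; set h := fun x => _.
have eP : (k.-1 + (P - k).+1)%N = P by lia.
suff : backward_rec (k.-1 + (P - k).+1) f = backward_rec (k.-1 + (P - k).+1) h by rewrite eP.
apply: backward_rec_congr; transitivity h.
  apply: funext => x /=; rewrite (backward_rec_id dep_f) //.
  by have -> : (P - (P - k).+1)%N = k.-1 by lia.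
symmetry; apply: (@backward_rec_id k.-1); last by lia.
move=> x x' eq_xx'; congr T; apply: funext => z; apply: dep_f => i j lt_i.
by rewrite !set_rowE; case: eqP => // ne_i; apply: eq_xx'; lia.
Qed.

End BackwardRecursion.

Lemma tk_ge0 (R : realType) n k : 0 <= tk R n k.
Proof. by rewrite mulr_ge0 // invr_ge0 exprn_ge0. Qed.

Lemma tk_ltS (R : realType) n k : tk R n k < tk R n k.+1.
Proof. by rewrite ltr_pM2r ?invr_gt0 ?exprn_gt0 // ltr_nat. Qed.

Lemma sublinear_space_inhabited (R : realType) (Omega : Type) H (E : (Omega -> R) -> R) :
  sublinear_space H E -> inhabited Omega.
Proof.
move=> slE; apply: contrapT => empty.
have E01 : (fun _ : Omega => 0 : R) = (fun _ => 1).
  by apply: funext => w; case: empty; constructor.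
by have := sl_const slE 0; rewrite E01 (sl_const slE 1) => /eqP; rewrite oner_eq0.
Qed.

Lemma dist_minr (R : realType) (u v c : R) :
  `|Num.min u c - Num.min v c| <= `|u - v|.
Proof.
case: (leP u c) => le_u; case: (leP v c) => le_v //.
- by rewrite !ler0_norm ?subr_le0 //; lra.
- by rewrite !ger0_norm ?subr_ge0 //; lra.
- by rewrite subrr normr0.
Qed.

Section OneProcess.
Variables (R : realType) (Omega : Type) (H : (Omega -> R) -> Prop) (E : (Omega -> R) -> R).
Variables (d n : nat) (M : R -> Omega -> 'rV[R]_d).
Hypotheses (E_sublinear : sublinear_space H E) (M_process : is_process H M).

Lemma MincsE w (i : 'I_(Nn n)) j : Mincs n M w i j = incr n M i w 0 j.
Proof. by rewrite mxE. Qed.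

Lemma incr_in_H k i : H (fun w => incr n M k w 0 i).
Proof.
have -> : (fun w => incr n M k w 0 i) =
    (fun w => M (tk R n k.+1) w 0 i + (-1) * M (tk R n k) w 0 i).
  by apply: funext => w; rewrite !mxE mulN1r.
by apply: (sl_add E_sublinear); last apply: (sl_scale E_sublinear); exact/M_process/tk_ge0.
Qed.

Lemma sublinear_op_law_incr k : sublinear_op (law E (incr n M k)).
Proof. exact/(sublinear_op_law E_sublinear)/incr_in_H. Qed.

Hypothesis M_indep : indep_incr E M.

(* Only the first k rows are meaningful: [inord] sends larger indices to 0. *)
Definition incrs_of_values k (V : 'M[R]_(k.+1, d)) : 'M[R]_(Nn n, d) :=
  \matrix_(i, j) (V (inord i.+1) j - V (inord i) j).

Lemma incrs_of_values_lipschitz k : mx_lipschitz 2 (@incrs_of_values k).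
Proof.
move=> V V'; apply: mxnorm_le => [|i j]; first by rewrite mulr_ge0 ?mxnorm_ge0.
rewrite !mxE; set a := inord i.+1; set b := inord i.
have -> : V a j - V b j - (V' a j - V' b j) = (V a j - V' a j) - (V b j - V' b j) by ring.
apply: le_trans (ler_normB _ _) _; rewrite mulr2n mulrDl mul1r.
by apply: lerD; exact: mxnorm_entry_sub.
Qed.

Lemma law_incr_set_row k g : bLip g -> depends_on_first_rows k.+1 g ->
  E (fun w => g (Mincs n M w)) =
  E (fun w => law E (incr n M k) (fun z => g (set_row (Mincs n M w) k z))).
Proof.
move=> bg dep_g; have [_ indep] := M_indep.
have := indep k (tk R n) (tk_ge0 _ _ _) (fun i _ => tk_ltS _ _ _).
set V := fun w => \matrix_(i < k.+1) M (tk R n i) w.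
pose phi (V' : 'M[R]_(k.+1, d)) (z : 'rV[R]_d) := g (set_row (incrs_of_values V') k z).
have bphi : bLip2 phi.
  apply: (bLip2_comp (K := 2)) (bLip2_set_row k bg) => //.
    exact: incrs_of_values_lipschitz.
  by move=> z z'; rewrite ler_peMl ?mxnorm_ge0 ?ler1n.
move=> /(_ phi bphi) indep_k.
have phiV w z : phi (V w) z = g (set_row (Mincs n M w) k z).
  apply: dep_g => i j lt_i; rewrite !set_rowE; case: eqP => // ne_i.
  by rewrite MincsE /V !mxE !inordK //; lia.
transitivity (E (fun w => phi (V w) (incr n M k w))).
  congr E; apply: funext => w; rewrite phiV; apply: dep_g => i j _.
  by rewrite set_rowE; case: eqP => [eq_i|//]; rewrite MincsE eq_i.
rewrite [LHS]indep_k; congr E; apply: funext => w.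
by congr E; apply: funext => w'; exact: phiV.
Qed.

Lemma backward_rec_law_incr h a : bLip h ->
  backward_rec (fun k => law E (incr n M k)) (Nn n) h a = E (fun w => h (Mincs n M w)).
Proof.
move=> bh; set B := backward_rec _.
have expand m : (m <= Nn n)%N ->
    E (fun w => h (Mincs n M w)) = E (fun w => B m h (Mincs n M w)).
  elim: m => [|m IH] le_m //; rewrite IH; last by lia.
  rewrite (law_incr_set_row (k := Nn n - m.+1)) //.
    by apply: bLip_backward_rec => // k; exact: sublinear_op_law_incr.
  move=> x x' eq_xx'; apply: backward_rec_local => i j lt_i; apply: eq_xx'; lia.
rewrite [RHS](expand (Nn n)) // -[LHS](sl_const E_sublinear); congr E; apply: funext => w.
by apply: backward_rec_local => i j; rewrite subnn.
Qed.

Local Open Scope classical_set_scope.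

Definition range_dist (a : 'M[R]_(Nn n, d)) : R :=
  inf [set mxnorm (a - Mincs n M w) | w in [set: Omega]].

Lemma range_dist_has_inf a : has_inf [set mxnorm (a - Mincs n M w) | w in [set: Omega]].
Proof.
have [w] := sublinear_space_inhabited E_sublinear.
split; first by exists (mxnorm (a - Mincs n M w)), w.
by exists 0 => _ [w' _ <-]; exact: mxnorm_ge0.
Qed.

Lemma range_dist_le a w : range_dist a <= mxnorm (a - Mincs n M w).
Proof. by apply: (ge_inf (proj2 (range_dist_has_inf a))); exists w. Qed.

Lemma le_range_dist a c : (forall w, c <= mxnorm (a - Mincs n M w)) -> c <= range_dist a.
Proof. by move=> le_c; apply: lb_le_inf (proj1 (range_dist_has_inf a)) _ => _ [w _ <-]. Qed.

Lemma range_dist_ge0 a : 0 <= range_dist a.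
Proof. by apply: le_range_dist => w; exact: mxnorm_ge0. Qed.

Lemma range_dist_Mincs w : range_dist (Mincs n M w) = 0.
Proof.
apply/eqP; rewrite eq_le range_dist_ge0 andbT.
by apply: le_trans (range_dist_le _ w) _; rewrite subrr mxnorm0.
Qed.

Lemma range_distB a b : range_dist a - range_dist b <= mxnorm (a - b).
Proof.
rewrite lerBlDl -lerBlDr; apply: le_range_dist => w; rewrite lerBlDr addrC.
exact: le_trans (range_dist_le a w) (mxnorm_triangle _ _ _).
Qed.

(* Truncated to be bounded, hence in C_{b.Lip}. *)
Definition trunc_range_dist (a : 'M[R]_(Nn n, d)) : R := Num.min (range_dist a) 1.

Lemma trunc_range_dist_ge0 a : 0 <= trunc_range_dist a.
Proof. by rewrite le_min range_dist_ge0 ler01. Qed.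

Lemma bLip_trunc_range_dist : bLip trunc_range_dist.
Proof.
split; [exists 1 => a | exists 1 => a b].
  by rewrite ger0_norm ?trunc_range_dist_ge0 // ge_min lexx orbT.
apply: le_trans (dist_minr _ _ _) _; rewrite mul1r ler_norml range_distB andbT.
by rewrite lerNl opprB mxnormB_sym range_distB.
Qed.

Lemma trunc_range_dist_Mincs w : trunc_range_dist (Mincs n M w) = 0.
Proof. by rewrite /trunc_range_dist range_dist_Mincs /Num.min ltr01. Qed.

Lemma expect_trunc_range_dist_Mincs : E (fun w => trunc_range_dist (Mincs n M w)) = 0.
Proof. by under eq_fun do rewrite trunc_range_dist_Mincs; exact: (sl_const E_sublinear). Qed.

End OneProcess.

Lemma le_mul_add_min1 (R : realType) (y C L u v : R) :
  0 <= C -> 0 <= L -> 0 <= u -> 0 <= v -> y <= C -> y <= L * (u + v) ->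
  y <= (C + L) * (Num.min u 1 + Num.min v 1).
Proof.
move=> C0 L0 u0 v0 le_yC le_yL; rewrite /Num.min.
by case: ltP => lt_u1; case: ltP => lt_v1; nra.
Qed.

Section Product.
Variables (R : realType) (Omega1 Omega2 : Type).
Variables (H1 : (Omega1 -> R) -> Prop) (E1 : (Omega1 -> R) -> R).
Variables (H2 : (Omega2 -> R) -> Prop) (E2 : (Omega2 -> R) -> R).
Variables (d n : nat) (M : R -> Omega1 -> 'rV[R]_d) (N : R -> Omega2 -> 'rV[R]_d).
Hypotheses (E1_sublinear : sublinear_space H1 E1) (E2_sublinear : sublinear_space H2 E2).
Hypotheses (M_process : is_process H1 M) (N_process : is_process H2 N).
Hypotheses (M_indep : indep_incr E1 M) (N_indep : indep_incr E2 N).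

Local Notation step := (step1 E1 E2 n M N).
Local Notation B := (backward_rec step (Nn n)).

Lemma step1_prod_op k : step k = prod_op (law E1 (incr n M k)) (law E2 (incr n N k)).
Proof. by []. Qed.

Lemma sublinear_op_step1 k : sublinear_op (step k).
Proof.
rewrite step1_prod_op; apply: sublinear_prod_op.
  exact: (sublinear_op_law_incr n E1_sublinear M_process).
exact: (sublinear_op_law_incr n E2_sublinear N_process).
Qed.

Lemma backwardE m phi : @backward R Omega1 Omega2 E1 E2 d n M N m phi = backward_rec step m phi.
Proof. by elim: m => [|m IH] //=; apply: funext => x; rewrite IH. Qed.

Lemma Xincs_row_mx w : Xincs n M N w = row_mx (Mincs n M w.1) (Mincs n N w.2).
Proof. by apply/matrixP => i j; rewrite !mxE; case: split => k; rewrite !mxE. Qed.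

Lemma backward_step1_lsubmx h a : bLip h ->
  B (fun x => h (lsubmx x)) a = E1 (fun w => h (Mincs n M w)).
Proof.
move=> bh; rewrite -(backward_rec_law_incr E1_sublinear M_process M_indep (lsubmx a) bh).
suff gen m x : backward_rec step m (fun y => h (lsubmx y)) x =
    backward_rec (fun k => law E1 (incr n M k)) m h (lsubmx x) by exact: gen.
elim: m x => [|m IH] x //=; rewrite step1_prod_op /prod_op /law.
congr E1; apply: funext => w1; under eq_fun do rewrite IH lsubmx_set_row.
exact: (sl_const E2_sublinear).
Qed.

Lemma backward_step1_rsubmx h a : bLip h ->
  B (fun x => h (rsubmx x)) a = E2 (fun w => h (Mincs n N w)).
Proof.
move=> bh; rewrite -(backward_rec_law_incr E2_sublinear N_process N_indep (rsubmx a) bh).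
suff gen m x : backward_rec step m (fun y => h (rsubmx y)) x =
    backward_rec (fun k => law E2 (incr n N k)) m h (rsubmx x) by exact: gen.
elim: m x => [|m IH] x //=; rewrite step1_prod_op /prod_op /law.
under eq_fun do under eq_fun do rewrite IH rsubmx_set_row.
exact: (sl_const E1_sublinear).
Qed.

Lemma diff_le_trunc_range_dist phi psi : bLip phi -> bLip psi ->
  (forall w, phi (Xincs n M N w) = psi (Xincs n M N w)) ->
  exists2 K, 0 <= K & forall x, `|phi x - psi x| <=
    K * (trunc_range_dist M (lsubmx x) + trunc_range_dist N (rsubmx x)).
Proof.
move=> bphi bpsi eq_range.
have [C1 [L1 [C10 L10 le_phi lip_phi]]] := bLipP bphi.
have [C2 [L2 [C20 L20 le_psi lip_psi]]] := bLipP bpsi.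
set L := L1 + L2 + 1; have L_gt0 : 0 < L by rewrite /L; lra.
exists (C1 + C2 + L) => [|x]; first by rewrite /L; lra.
set a := lsubmx x; set b := rsubmx x; set y := `|phi x - psi x|.
have le_yC : y <= C1 + C2 by apply: le_trans (ler_normB _ _) (lerD _ _).
have le_yL w1 w2 : y / L <= mxnorm (a - Mincs n M w1) + mxnorm (b - Mincs n N w2).
  set X := Xincs n M N (w1, w2).
  have near_X : mxnorm (x - X) <= mxnorm (a - Mincs n M w1) + mxnorm (b - Mincs n N w2).
    by rewrite /X Xincs_row_mx -{1}(hsubmxK x); exact: mxnorm_row_mx.
  have -> : y = `|(phi x - phi X) - (psi x - psi X)| by rewrite /y eq_range; congr `|_|; ring.
  rewrite ler_pdivrMr // [_ * L]mulrC; apply: le_trans (ler_normB _ _) _.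
  apply: le_trans (lerD (lip_phi x X) (lip_psi x X)) _; rewrite -mulrDl.
  by apply: ler_pM; rewrite ?addr_ge0 ?mxnorm_ge0 // /L lerDl.
have le_y_dist : y <= L * (range_dist M a + range_dist N b).
  rewrite -ler_pdivrMl // mulrC -lerBlDl; apply: (le_range_dist E2_sublinear) => w2.
  rewrite lerBlDl -lerBlDr; apply: (le_range_dist E1_sublinear) => w1.
  by rewrite lerBlDr; exact: le_yL.
apply: (le_mul_add_min1 _ _ (range_dist_ge0 M E1_sublinear a)
  (range_dist_ge0 N E2_sublinear b) le_yC le_y_dist); rewrite /L; lra.
Qed.

Lemma backward_step1_le_on_range phi psi : bLip phi -> bLip psi ->
  (forall w, phi (Xincs n M N w) = psi (Xincs n M N w)) -> B phi 0 <= B psi 0.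
Proof.
move=> bphi bpsi eq_range; have [K K0 le_diff] := diff_le_trunc_range_dist bphi bpsi eq_range.
have bdM := bLip_trunc_range_dist n M E1_sublinear.
have bdN := bLip_trunc_range_dist n N E2_sublinear.
have bGM := bLip_comp ler01 (@lsubmx_lipschitz _ _ d d) bdM.
have bGN := bLip_comp ler01 (@rsubmx_lipschitz _ _ d d) bdN.
have BG_le0 : B (fun x : 'M[R]_(Nn n, d + d) =>
    trunc_range_dist M (lsubmx x) + trunc_range_dist N (rsubmx x)) 0 <= 0.
  apply: le_trans; first exact: (backward_rec_subadd sublinear_op_step1 _ bGM bGN 0).
  rewrite (backward_step1_lsubmx 0 bdM) (backward_step1_rsubmx 0 bdN).
  by rewrite (expect_trunc_range_dist_Mincs n M E1_sublinear)
    (expect_trunc_range_dist_Mincs n N E2_sublinear) addr0.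
apply: le_trans
  (backward_rec_le_add_scale sublinear_op_step1 _ bphi bpsi (bLip_add bGM bGN) K0 _ 0) _.
  by move=> x; rewrite -lerBlDl; exact: le_trans (ler_norm _) (le_diff x).
by rewrite gerDl; exact: mulr_ge0_le0.
Qed.

Local Notation En := (En E1 E2 n M N).

Lemma En_comp phi : bLip phi -> En (fun w => phi (Xincs n M N w)) = B phi 0.
Proof.
move=> bphi; rewrite /Defs.En; case: pselect => [HnY|]; last by case; exists phi.
case: (cid HnY) => phi0 [bphi0 eq_phi0] /=; rewrite /En_val backwardE.
have eq_range w : phi0 (Xincs n M N w) = phi (Xincs n M N w).
  exact: esym (congr1 (fun Y => Y w) eq_phi0).
by apply/eqP; rewrite eq_le !backward_step1_le_on_range // => w; rewrite eq_range.
Qed.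

Lemma sublinear_space_En : sublinear_space (Hn n M N) En.
Proof.
split.
- move=> _ _ [phi [bphi ->]] [psi [bpsi ->]].
  by exists (fun x => phi x + psi x); split=> //; exact: bLip_add.
- move=> c _ [phi [bphi ->]].
  by exists (fun x => c * phi x); split=> //; exact: bLip_scale.
- move=> m X phi HX bphi; have /choice[f Hf] := HX.
  exists (fun x => phi (\row_i f i x)); split.
    by apply: bLip_comp_row => // i; have [] := Hf i.
  apply: funext => w; congr phi; apply/rowP => i; rewrite mxE.
  by have [_ eq_i] := Hf i; exact: (congr1 (fun Y => Y w) eq_i).
- move=> _ _ [phi [bphi ->]] [psi [bpsi ->]] le_phi_psi.
  (* phi <= psi holds only on the range of Xincs: compare min phi psi with psi. *)
  have bmin := bLip_min bphi bpsi.
  have -> : (fun w => phi (Xincs n M N w)) =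
      (fun w => Num.min (phi (Xincs n M N w)) (psi (Xincs n M N w))).
    by apply: funext => w; symmetry; apply/min_idPl; exact: le_phi_psi.
  rewrite (En_comp bmin) (En_comp bpsi).
  apply: (backward_rec_mono sublinear_op_step1) => // x.
  by rewrite ge_min lexx orbT.
- move=> c; rewrite -[fun _ => c]/(fun w => (fun _ : 'M[R]_(Nn n, d + d) => c) (Xincs n M N w)).
  by rewrite (En_comp (bLip_const _ _ c)) (backward_rec_const sublinear_op_step1).
- move=> _ _ [phi [bphi ->]] [psi [bpsi ->]].
  rewrite (En_comp (bLip_add bphi bpsi)) (En_comp bphi) (En_comp bpsi).
  exact: (backward_rec_subadd sublinear_op_step1).
- move=> c _ c0 [phi [bphi ->]].
  rewrite (En_comp (bLip_scale c bphi)) (En_comp bphi).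
  exact: (backward_rec_homog sublinear_op_step1).
Qed.

Lemma En_last_row k f : (1 <= k <= Nn n)%N -> bLip f -> depends_on_first_rows k f ->
  En (fun w => f (Xincs n M N w)) =
  En (fun w => step k.-1 (fun z => f (set_row (Xincs n M N w) k.-1 z))).
Proof.
move=> le_k bf dep_f.
have bstep : bLip (fun x => step k.-1 (fun z => f (set_row x k.-1 z))).
  exact: (bLip2_sublinear_op (sublinear_op_step1 _) (bLip2_set_row _ bf)).
by rewrite (En_comp bf) (En_comp bstep) (backward_rec_last sublinear_op_step1 le_k dep_f).
Qed.

Lemma indep_Xincr_En k : (2 <= k <= Nn n)%N ->
  indep En (fun w => \matrix_(i < k.-1) Xincr n M N i w) (fun w => Xincr n M N k.-1 w).
Proof.
move=> le_k phi bphi.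
have [le_k1 lt_k1 le1k] : [/\ (k.-1 <= Nn n)%N, (k.-1 < Nn n)%N & (1 <= k <= Nn n)%N].
  by split; lia.
pose top := @first_rows R _ (d + d) _ le_k1.
pose last := @row R _ (d + d) (Ordinal lt_k1).
have topX w : top (Xincs n M N w) = \matrix_(i < k.-1) Xincr n M N i w.
  by apply/matrixP => i j; rewrite !mxE.
have lastX w : last (Xincs n M N w) = Xincr n M N k.-1 w by apply/rowP => j; rewrite !mxE.
have dep_top_last (F : 'M[R]_(k.-1, d + d) -> 'rV[R]_(d + d) -> R) :
    depends_on_first_rows k (fun x => F (top x) (last x)).
  move=> x x' eq_xx'; congr F; [apply/matrixP => i j | apply/rowP => j];
    rewrite !mxE; apply: eq_xx' => /=; [have := ltn_ord i; lia | lia].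
have step_top_last x (F : 'M[R]_(k.-1, d + d) -> 'rV[R]_(d + d) -> R) :
    step k.-1 (fun z => F (top (set_row x k.-1 z)) (last (set_row x k.-1 z))) =
    step k.-1 (F (top x)).
  by congr step1; apply: funext => z; rewrite /top /last first_rows_set_row // row_set_row.
pose g c := step k.-1 (phi c).
have inner c : En (fun w => phi c (Xincr n M N k.-1 w)) = g c.
  have bphic := bLip_comp ler01 (@row_lipschitz _ _ _ (Ordinal lt_k1)) (bLip2_partial c bphi).
  under eq_fun do rewrite -lastX.
  rewrite (En_last_row le1k bphic (dep_top_last (fun _ => phi c))).
  under eq_fun do rewrite (step_top_last _ (fun _ => phi c)).
  exact: (sl_const sublinear_space_En).
have bPhi : bLip (fun x => phi (top x) (last x)).
  exact: bLip2_diag (bLip2_comp ler01 (@first_rows_lipschitz _ _ (d + d) _ le_k1)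
    (@row_lipschitz _ _ _ (Ordinal lt_k1)) bphi).
under eq_fun do rewrite -topX -lastX.
rewrite (En_last_row le1k bPhi (dep_top_last phi)).
under eq_fun do rewrite step_top_last.
by congr En; apply: funext => w; rewrite inner topX.
Qed.

Lemma same_distr_En_M : same_distr En E1 (fun w => Mincs n M w.1) (Mincs n M).
Proof.
move=> phi bphi.
have bphil := bLip_comp ler01 (@lsubmx_lipschitz _ _ d d) bphi.
rewrite -(backward_step1_lsubmx 0 bphi) -(En_comp bphil).
by congr En; apply: funext => w; rewrite Xincs_row_mx row_mxKl.
Qed.

Lemma same_distr_En_N : same_distr En E2 (fun w => Mincs n N w.2) (Mincs n N).
Proof.
move=> phi bphi.
have bphir := bLip_comp ler01 (@rsubmx_lipschitz _ _ d d) bphi.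
rewrite -(backward_step1_rsubmx 0 bphi) -(En_comp bphir).
by congr En; apply: funext => w; rewrite Xincs_row_mx row_mxKr.
Qed.

End Product.

Theorem lemma3p2 (R : realType) (Omega1 Omega2 : Type)
    (H1 : (Omega1 -> R) -> Prop) (E1 : (Omega1 -> R) -> R)
    (H2 : (Omega2 -> R) -> Prop) (E2 : (Omega2 -> R) -> R)
    (d : nat) (M : R -> Omega1 -> 'rV[R]_d) (N : R -> Omega2 -> 'rV[R]_d) :
  sublinear_space H1 E1 -> sublinear_space H2 E2 ->
  is_process H1 M -> is_process H2 N ->
  indep_incr E1 M -> indep_incr E2 N ->
  condA H1 E1 H2 E2 M N ->
  forall n : nat, (1 <= n)%N ->
    sublinear_space (Hn n M N) (En E1 E2 n M N) /\
    (forall k : nat, (2 <= k <= Nn n)%N ->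
       indep (En E1 E2 n M N)
         (fun w => \matrix_(i < k.-1) Xincr n M N i w)
         (fun w => Xincr n M N k.-1 w)) /\
    same_distr (En E1 E2 n M N) E1 (fun w => Mincs n M w.1) (Mincs n M) /\
    same_distr (En E1 E2 n M N) E2 (fun w => Mincs n N w.2) (Mincs n N).
Proof.
move=> slE1 slE2 procM procN indepM indepN _ n _.
split; first exact: (sublinear_space_En n slE1 slE2 procM procN indepM indepN).
split; first by move=> k; exact: (indep_Xincr_En slE1 slE2 procM procN indepM indepN).
split; first exact: (same_distr_En_M slE1 slE2 procM procN indepM indepN).
exact: (same_distr_En_N slE1 slE2 procM procN indepM indepN).
Qed.
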